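(* Let $n,R,k_0,K,d$ be positive integers. For each round $r\in\{1,\dots,R\}$ let $\ell_r:\{1,\dots,n\}\to\{0,\dots,k_0-1\}$ be a labeling and let $\mathbf{w}^{(r)}\in\mathbb{R}^d_{\ge 0}$ with $\|\mathbf{w}^{(r)}\|_1=1$. Let $\mathcal{C}_1,\dots,\mathcal{C}_K$ be a partition of $\{1,\dots,n\}$ into nonempty sets. For a cluster $\mathcal{C}_j$, round $r$ and label $t\in\{0,\dots,k_0-1\}$ define $$F_j(r,t)=\frac{1}{|\mathcal{C}_j|}\sum_{i\in\mathcal{C}_j}\mathbb{I}\{\ell_r(i)=t\},\qquad \mathrm{DFI}_j(r,t)=\max\Big\{0,\;F_j(r,t)-\max_{k\ne j}F_k(r,t)\Big\},$$ and $c_{j,r}=\sum_{t=0}^{k_0-1}\mathrm{DFI}_j(r,t)$. Let $\varepsilon>0$ be a constant with $\varepsilon\le 1/|\mathcal{C}_j|$ for every $j$. For an instance $i\in\mathcal{C}_j$ define $$c_i[r]=\frac{\mathrm{DFI}_j(r,\ell_r(i))}{\max\{\varepsilon,\,F_j(r,\ell_r(i))\}},\qquad \mathbf{w}^{\mathrm{raw}}_i=\sum_{r=1}^R c_i[r]\,\mathbf{w}^{(r)}.$$ For a nonzero vector $\mathbf{v}$ let $L_1(\mathbf{v})=\mathbf{v}/\|\mathbf{v}\|_1$, and define $\mathbf{W}_{\mathrm{cluster}}(\mathcal{C}_j)=L_1\big(\sum_{r=1}^R c_{j,r}\mathbf{w}^{(r)}\big)$. Then for every $j\in\{1,\dots,K\}$,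 $$\frac{1}{|\mathcal{C}_j|}\sum_{i\in\mathcal{C}_j}\mathbf{w}^{\mathrm{raw}}_i=\sum_{r=1}^R c_{j,r}\,\mathbf{w}^{(r)},$$ and consequently, whenever this vector is nonzero, $$L_1\Big(\frac{1}{|\mathcal{C}_j|}\sum_{i\in\mathcal{C}_j}\mathbf{w}^{\mathrm{raw}}_i\Big)=\mathbf{W}_{\mathrm{cluster}}(\mathcal{C}_j).$$
   Context: Setting: $n$ instances are clustered in $R$ ''rounds'', each round $r$ producing base labels $\ell_r(i)\in\{0,\dots,k_0-1\}$ and carrying a nonnegative feature-weight vector $\mathbf{w}^{(r)}$ over $d$ features; a final clustering $\mathcal{C}_1,\dots,\mathcal{C}_K$ is given. $F_j(r,t)$ is the cluster-bit frequency, $\mathrm{DFI}_j(r,t)$ the Discriminative FreqItem score, $c_{j,r}$ the round credit of cluster $j$, $\mathbf{w}^{\mathrm{raw}}_i$ the raw instance-level feature weights, and $\mathbf{W}_{\mathrm{cluster}}$ the cluster-level feature weights. The $\max_{k\ne j}$ is over $k\in\{1,\dots,K\}\setminus\{j\}$ (taken as $0$ if $K=1$). *)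

From HB Require Import structures.
From mathcomp Require Import all_boot all_order all_algebra.
Set Implicit Arguments. Unset Strict Implicit. Unset Printing Implicit Defensive.
Import Order.TTheory GRing.Theory Num.Theory.
Local Open Scope ring_scope.

Section Defs.
Variables (R : realFieldType) (n nR k0 K d : nat).
Variable C : 'I_K -> {set 'I_n}.
Variable ell : 'I_nR -> 'I_n -> 'I_k0.
Variable w : 'I_nR -> 'rV[R]_d.

Definition Ffreq (j : 'I_K) (r : 'I_nR) (t : 'I_k0) : R :=
  (#|C j|%:R)^-1 * \sum_(i in C j) (ell r i == t)%:R.

(* max_{k <> j} F_k(r,t), taken as 0 if there is no k <> j *)
Definition Fmax_other (j : 'I_K) (r : 'I_nR) (t : 'I_k0) : R :=
  \big[Num.max/0]_(k < K | k != j) Ffreq k r t.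

Definition DFI (j : 'I_K) (r : 'I_nR) (t : 'I_k0) : R :=
  Num.max 0 (Ffreq j r t - Fmax_other j r t).

Definition credit (j : 'I_K) (r : 'I_nR) : R := \sum_(t < k0) DFI j r t.

Definition inst_credit (eps : R) (j : 'I_K) (i : 'I_n) (r : 'I_nR) : R :=
  DFI j r (ell r i) / Num.max eps (Ffreq j r (ell r i)).

Definition wraw (eps : R) (j : 'I_K) (i : 'I_n) : 'rV[R]_d :=
  \sum_(r < nR) inst_credit eps j i r *: w r.

End Defs.

Definition l1norm (R : realFieldType) (d : nat) (v : 'rV[R]_d) : R :=
  \sum_(f < d) `|v ord0 f|.
Definition L1 (R : realFieldType) (d : nat) (v : 'rV[R]_d) : 'rV[R]_d :=
  (l1norm v)^-1 *: v.

Definition Wcluster (R : realFieldType) (n nR k0 K d : nat)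
  (C : 'I_K -> {set 'I_n}) (ell : 'I_nR -> 'I_n -> 'I_k0)
  (w : 'I_nR -> 'rV[R]_d) (j : 'I_K) : 'rV[R]_d :=
  L1 (\sum_(r < nR) credit R C ell j r *: w r).
Arguments Ffreq {R n nR k0 K} C ell j r t.
Arguments Fmax_other {R n nR k0 K} C ell j r t.
Arguments DFI {R n nR k0 K} C ell j r t.
Arguments credit {R n nR k0 K} C ell j r.
Arguments inst_credit {R n nR k0 K} C ell eps j i r.
Arguments wraw {R n nR k0 K d} C ell w eps j i.

From HB Require Import structures.
From mathcomp Require Import all_boot all_order all_algebra.
Set Implicit Arguments.
Unset Strict Implicit.
Unset Printing Implicit Defensive.

Import Order.TTheory GRing.Theory Num.Theory.
Local Open Scope ring_scope.

(* An instance of C_j whose round-r label is t receives credit DFI_j(r,t) / F_j(r,t):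
   the label occurs in C_j, so F_j(r,t) >= 1/|C_j| >= eps and the max in the
   denominator is attained by F_j(r,t).  Grouping the instances of C_j by label, t
   occurs |C_j| F_j(r,t) times, so their credits add up to |C_j| DFI_j(r,t); labels
   with F_j(r,t) = 0 contribute nothing since 0 <= DFI_j(r,t) <= F_j(r,t).  Hence the
   cluster average of the instance credits of round r is c_{j,r}, and the raw
   weights are linear in these credits. *)

Lemma sum_by_label (R : pzSemiRingType) (I T : finType) (A : {pred I})
    (f : I -> T) (g : T -> R) :
  \sum_(i in A) g (f i) = \sum_t (\sum_(i in A) (f i == t)%:R) * g t.
Proof.
have gE x : g x = \sum_t (x == t)%:R * g t.
  rewrite (bigD1 x) //= eqxx mul1r big1 ?addr0 // => t /negbTE.
  by rewrite eq_sym => ->; rewrite mul0r.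
under eq_bigr => i _ do rewrite gE.
by rewrite exchange_big; apply: eq_bigr => t _; rewrite mulr_suml.
Qed.

Section ClusterCredits.

Variables (R : realFieldType) (n nR k0 K : nat).
Variables (C : 'I_K -> {set 'I_n}) (ell : 'I_nR -> 'I_n -> 'I_k0).

Local Notation F := (@Ffreq R n nR k0 K C ell).
Local Notation DFI := (@DFI R n nR k0 K C ell).
Local Notation cardC j := (#|C j|%:R : R).

Lemma Ffreq_ge0 j r t : 0 <= F j r t.
Proof. by rewrite mulr_ge0 ?invr_ge0 ?ler0n ?sumr_ge0 // => i _; rewrite ler0n. Qed.

Lemma Fmax_other_ge0 j r t : 0 <= Fmax_other C ell j r t :> R.
Proof.
apply: (big_ind (fun x : R => 0 <= x)) => // [x y x0 _|k _].
  by rewrite le_max x0.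
exact: Ffreq_ge0.
Qed.

Lemma DFI_ge0 j r t : 0 <= DFI j r t.
Proof. by rewrite le_max lexx. Qed.

Lemma DFI_le_Ffreq j r t : DFI j r t <= F j r t.
Proof. by rewrite ge_max Ffreq_ge0 lerBlDr lerDl Fmax_other_ge0. Qed.

Lemma Ffreq_label_ge j r i : i \in C j -> (cardC j)^-1 <= F j r (ell r i).
Proof.
move=> iCj; rewrite -[leLHS]mulr1 ler_wpM2l ?invr_ge0 ?ler0n //.
by rewrite (bigD1 i) //= eqxx lerDl sumr_ge0 // => k _; rewrite ler0n.
Qed.

Lemma inst_creditE (eps : R) j i r :
  eps <= (cardC j)^-1 -> i \in C j ->
  inst_credit C ell eps j i r = DFI j r (ell r i) / F j r (ell r i).
Proof.
move=> eps_le iCj; rewrite /inst_credit; congr (_ / _).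
by apply/max_idPr; apply: le_trans eps_le (Ffreq_label_ge r iCj).
Qed.

Lemma sum_inst_credit (eps : R) j r :
  C j != set0 -> eps <= (cardC j)^-1 ->
  \sum_(i in C j) inst_credit C ell eps j i r = cardC j * credit C ell j r.
Proof.
move=> Cj0 eps_le; have card0 : cardC j != 0 by rewrite pnatr_eq0 -lt0n card_gt0.
rewrite (eq_bigr _ (fun i => inst_creditE r eps_le)).
rewrite (sum_by_label _ _ (fun t => DFI j r t / F j r t)) /credit mulr_sumr.
apply: eq_bigr => t _; rewrite -[X in X * _](mulVKf card0) -/(F j r t) -mulrA.
have [Ft0|Ft_neq0] := eqVneq (F j r t) 0; last by rewrite [F j r t * _]mulrC divfK.
suff -> : DFI j r t = 0 by rewrite Ft0 !(mul0r, mulr0).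
by apply/eqP; rewrite eq_le DFI_ge0 -Ft0 DFI_le_Ffreq.
Qed.

End ClusterCredits.

Theorem lemma3p6 (R : realFieldType) (n nR k0 K d : nat)
  (Hn : (0 < n)%N) (HR : (0 < nR)%N) (Hk0 : (0 < k0)%N)
  (HK : (0 < K)%N) (Hd : (0 < d)%N)
  (ell : 'I_nR -> 'I_n -> 'I_k0)
  (w : 'I_nR -> 'rV[R]_d)
  (Hw_nonneg : forall r f, 0 <= w r ord0 f)
  (Hw_l1 : forall r, l1norm (w r) = 1)
  (C : 'I_K -> {set 'I_n})
  (HC_nonempty : forall j, C j != set0)
  (HC_disj : forall j k, j != k -> [disjoint C j & C k])
  (HC_cover : \bigcup_(j < K) C j = [set: 'I_n])
  (eps : R) (Heps : 0 < eps)
  (Heps_le : forall j, eps <= (#|C j|%:R)^-1) :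
  forall j : 'I_K,
    let avg := (#|C j|%:R)^-1 *: \sum_(i in C j) wraw C ell w eps j i in
    avg = \sum_(r < nR) credit C ell j r *: w r /\
    (avg != 0 -> L1 avg = Wcluster C ell w j).
Proof.
move=> j avg.
have card0 : #|C j|%:R != 0 :> R by rewrite pnatr_eq0 -lt0n card_gt0.
have avgE : avg = \sum_(r < nR) credit C ell j r *: w r.
  rewrite /avg /wraw exchange_big scaler_sumr; apply: eq_bigr => r _.
  by rewrite -scaler_suml sum_inst_credit // scalerA mulKf.
by split=> // _; rewrite avgE.
Qed.
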